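(* Let $R$ be a ring and let $V$ be an $(R,R)$-bimodule which is also an idempotent-free ring (not necessarily with identity), and let $S=I(R;V)$ be the ideal extension of $R$ by $V$. The following are equivalent: (1) $S$ is uniquely weakly $I'$-clean for some ideal $I'$ of $S$; (2) (a) $R$ is uniquely weakly $I$-clean for some ideal $I$ of $R$, and (b) for every $e\in Idem(R)$ and every $v\in V$, $ev=ve$.
   Context: All rings other than $V$ are associative with identity; $Idem(R)$ is the set of idempotents. $V$ is an $(R,R)$-bimodule carrying an associative multiplication compatible with the bimodule structure (i.e. $(rv)w=r(vw)$, $(vr)w=v(rw)$, $(vw)r=v(wr)$ for $r\in R$, $v,w\in V$); $V$ is idempotent free if $v^2=v$ implies $v=0$. The ideal extension $I(R;V)$ is the additive group $R\oplus V$ with multiplication $(r,v)(s,w)=(rs,\,rw+vs+vw)$; it is a ring with identity $(1,0)$. For an ideal $I$ of a ring $A$, $A$ is uniquely weakly $I$-clean if for every $x\in A$ there exists a unique idempotent $e\in A$ with $x-e\in I$ or $x+e\in I$. *)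

From HB Require Import structures.
From mathcomp Require Import all_boot all_order all_algebra.
Set Implicit Arguments. Unset Strict Implicit. Unset Printing Implicit Defensive.
Import GRing.Theory.
Local Open Scope ring_scope.

Record bimodRing (R : pzRingType) (V : zmodType) := BimodRing {
  lact : R -> V -> V;
  ract : V -> R -> V;
  vmul : V -> V -> V;
  lactDl : forall r s v, lact (r + s) v = lact r v + lact s v;
  lactDr : forall r v w, lact r (v + w) = lact r v + lact r w;
  lactA : forall r s v, lact (r * s) v = lact r (lact s v);
  lact1 : forall v, lact 1 v = v;
  ractDl : forall v w r, ract (v + w) r = ract v r + ract w r;
  ractDr : forall v r s, ract v (r + s) = ract v r + ract v s;
  ractA : forall v r s, ract v (r * s) = ract (ract v r) s;
  ract1 : forall v, ract v 1 = v;
  lractA : forall r v s, ract (lact r v) s = lact r (ract v s);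
  vmulA : forall u v w, vmul (vmul u v) w = vmul u (vmul v w);
  vmulDl : forall u v w, vmul (u + v) w = vmul u w + vmul v w;
  vmulDr : forall u v w, vmul u (v + w) = vmul u v + vmul u w;
  lmulA : forall r v w, vmul (lact r v) w = lact r (vmul v w);
  rlmulA : forall v r w, vmul (ract v r) w = vmul v (lact r w);
  rmulA : forall v w r, ract (vmul v w) r = vmul v (ract w r)
}.

Definition idempotent_free (R : pzRingType) (V : zmodType) (B : bimodRing R V) :=
  forall v : V, vmul B v v = v -> v = 0.

Definition iext (R : pzRingType) (V : zmodType) (B : bimodRing R V) : Type :=
  (R * V)%type.

Section IdealExtension.
Variables (R : pzRingType) (V : zmodType) (B : bimodRing R V).

HB.instance Definition _ := GRing.Zmodule.on (iext B).

Definition iext_one : iext B := (1, 0).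
Definition iext_mul (x y : iext B) : iext B :=
  (x.1 * y.1, lact B x.1 y.2 + ract B x.2 y.1 + vmul B x.2 y.2).

Let lact0r v : lact B 0 v = 0.
Proof. by apply: (addrI (lact B 0 v)); rewrite -lactDl !addr0. Qed.
Let lactr0 r : lact B r 0 = 0.
Proof. by apply: (addrI (lact B r 0)); rewrite -lactDr !addr0. Qed.
Let ract0r r : ract B 0 r = 0.
Proof. by apply: (addrI (ract B 0 r)); rewrite -ractDl !addr0. Qed.
Let ractr0 v : ract B v 0 = 0.
Proof. by apply: (addrI (ract B v 0)); rewrite -ractDr !addr0. Qed.
Let vmul0r v : vmul B 0 v = 0.
Proof. by apply: (addrI (vmul B 0 v)); rewrite -vmulDl !addr0. Qed.
Let vmulr0 v : vmul B v 0 = 0.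
Proof. by apply: (addrI (vmul B v 0)); rewrite -vmulDr !addr0. Qed.

Lemma iext_mulA : associative iext_mul.
Proof.
move=> [r v] [s w] [t x]; rewrite /iext_mul /=; congr (_, _); first by rewrite mulrA.
rewrite !lactDr !ractDl !vmulDl !vmulDr -!lactA ractA !lractA !lmulA !rlmulA
        !rmulA !vmulA -!addrA; congr (_ + (_ + _)).
rewrite addrCA; congr (_ + _); rewrite [RHS]addrCA; congr (_ + _).
exact: addrCA.
Qed.

Lemma iext_mul1r : left_id iext_one iext_mul.
Proof.
by move=> [s w]; rewrite /iext_mul /= mul1r lact1 ract0r vmul0r !addr0.
Qed.

Lemma iext_mulr1 : right_id iext_one iext_mul.
Proof.
by move=> [s w]; rewrite /iext_mul /= mulr1 ract1 lactr0 vmulr0 add0r addr0.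
Qed.

Lemma iext_mulDl : left_distributive iext_mul +%R.
Proof.
move=> [r v] [s w] [t x]; rewrite /iext_mul /=; congr (_, _); first by rewrite mulrDl.
rewrite lactDl ractDl vmulDl -!addrA /=; congr (_ + _).
rewrite addrCA; congr (_ + _); rewrite [RHS]addrCA; congr (_ + _).
exact: addrCA.
Qed.

Lemma iext_mulDr : right_distributive iext_mul +%R.
Proof.
move=> [r v] [s w] [t x]; rewrite /iext_mul /=; congr (_, _); first by rewrite mulrDr.
rewrite lactDr ractDr vmulDr -!addrA /=; congr (_ + _).
rewrite addrCA; congr (_ + _); rewrite [RHS]addrCA; congr (_ + _).
exact: addrCA.
Qed.

HB.instance Definition _ := GRing.Zmodule_isPzRing.Build (iext B)
  iext_mulA iext_mul1r iext_mulr1 iext_mulDl iext_mulDr.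

Lemma iext_mulE (x y : iext B) :
  x * y = (x.1 * y.1, lact B x.1 y.2 + ract B x.2 y.1 + vmul B x.2 y.2).
Proof. by []. Qed.

Lemma iext_oneE : (1 : iext B) = (1, 0).
Proof. by []. Qed.

End IdealExtension.

Definition is_ideal (A : pzRingType) (I : {pred A}) : Prop :=
  [/\ 0 \in I,
      forall x y, x \in I -> y \in I -> x - y \in I,
      forall a x, x \in I -> a * x \in I
    & forall a x, x \in I -> x * a \in I].

Definition uniquely_weakly_clean (A : pzRingType) (I : {pred A}) : Prop :=
  forall x : A, exists! e : A, e * e = e /\ (x - e \in I \/ x + e \in I).

From HB Require Import structures.
From mathcomp Require Import all_boot all_order all_algebra.

Set Implicit Arguments.
Unset Strict Implicit.
Unset Printing Implicit Defensive.
Import GRing.Theory.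
Local Open Scope ring_scope.

(* In a uniquely weakly clean ring every square-zero element lies in the ideal,
   so the uniqueness of the idempotent attached to an idempotent e rules out
   the idempotents e + e y (1 - e); hence idempotents are central.  In I(R;V)
   this is exactly the condition e v = v e.  Conversely, once e v = v e and V
   is idempotent free, the idempotents of I(R;V) are the pairs (e, 0) with e
   idempotent in R, and the clean decompositions of R and of I(R;V) correspond
   through the ring morphisms r |-> (r, 0) and (r, v) |-> r. *)

Section Ideal.
Variables (A : pzRingType) (I : {pred A}).
Hypothesis idealI : is_ideal I.

Lemma ideal0 : 0 \in I.
Proof. by case: idealI. Qed.

Lemma idealB (x y : A) : x \in I -> y \in I -> x - y \in I.
Proof. by case: idealI => _ subI _ _; apply: subI. Qed.

Lemma idealN (x : A) : x \in I -> - x \in I.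
Proof. by move=> Ix; rewrite -sub0r idealB // ideal0. Qed.

Lemma idealD (x y : A) : x \in I -> y \in I -> x + y \in I.
Proof. by move=> Ix Iy; rewrite -[y]opprK idealB // idealN. Qed.

Lemma idealMl (a x : A) : x \in I -> a * x \in I.
Proof. by case: idealI => _ _ mulIl _; apply: mulIl. Qed.

Lemma idealMr (a x : A) : x \in I -> x * a \in I.
Proof. by case: idealI => _ _ _ mulIr; apply: mulIr. Qed.

Lemma sqr0_sub_idem_in_ideal (n p : A) :
  n * n = 0 -> p * p = p -> n - p \in I -> n \in I.
Proof.
move=> nn pp Id; set d := n - p in Id.
have Ip : p \in I.
  have -> : p = - (d * n) - p * d.
    by rewrite /d mulrBl mulrBr nn pp sub0r opprK opprB addrCA subrr addr0.
  by apply: idealB; [apply/idealN/idealMr | apply: idealMl].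
by rewrite -(subrK p n); apply: idealD.
Qed.

Lemma is_ideal_preim (A' : pzRingType) (f : {rmorphism A' -> A}) :
  is_ideal [pred x | f x \in I].
Proof.
split=> [|x y|a x|a x]; rewrite !inE ?rmorph0 ?ideal0 //.
- by rewrite rmorphB; apply: idealB.
- by rewrite rmorphM; apply: idealMl.
- by rewrite rmorphM; apply: idealMr.
Qed.

Section UniquelyWeaklyClean.
Hypothesis uwcI : uniquely_weakly_clean I.

Lemma sqr0_in_ideal (n : A) : n * n = 0 -> n \in I.
Proof.
move=> nn; have [p [[pp [Inp | Inp]] _]] := uwcI n.
  exact: sqr0_sub_idem_in_ideal Inp.
rewrite -[n]opprK; apply/idealN/(sqr0_sub_idem_in_ideal _ pp).
  by rewrite mulrN mulNr opprK nn.
by rewrite -opprD; apply: idealN.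
Qed.

Lemma idem_sqr0_perturb0 (e n : A) :
  e * e = e -> n * n = 0 -> e * n + n * e = n -> n = 0.
Proof.
move=> ee nn en.
have idem_en : (e + n) * (e + n) = e + n.
  by rewrite mulrDl !mulrDr ee nn addr0 -addrA en.
have [p [_ uniq_p]] := uwcI e.
have pe : p = e by apply: uniq_p; split=> //; left; rewrite subrr ideal0.
have pen : p = e + n.
  apply: uniq_p; split=> //; left.
  by rewrite opprD addrA subrr sub0r; apply/idealN/sqr0_in_ideal.
by apply: (addrI e); rewrite addr0 -pen pe.
Qed.

Lemma idem_corner0 (e y : A) : e * e = e -> e * y * (1 - e) = 0.
Proof.
move=> ee; set n := e * y * (1 - e).
have ne : n * e = 0 by rewrite /n -mulrA mulrBl mul1r ee subrr mulr0.
have en : e * n = n by rewrite /n !mulrA ee.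
apply: (idem_sqr0_perturb0 ee); last by rewrite en ne addr0.
by rewrite -{2}en mulrA ne mul0r.
Qed.

Lemma idem_central (e y : A) : e * e = e -> e * y = y * e.
Proof.
move=> ee; have ee' : (1 - e) * (1 - e) = 1 - e.
  by rewrite mulrBl mul1r mulrBr mulr1 ee subrr subr0.
move: (idem_corner0 y ee) (idem_corner0 y ee').
rewrite subKr mulrBr mulr1 => /subr0_eq ->.
by rewrite -mulrA !mulrBl !mul1r mulrA => /subr0_eq.
Qed.

End UniquelyWeaklyClean.

Lemma uniquely_weakly_clean_preim (A' : pzRingType) (f : {rmorphism A' -> A}) :
  (forall e, e * e = e -> exists2 e', e' * e' = e' & f e' = e) ->
  (forall e1 e2, e1 * e1 = e1 -> e2 * e2 = e2 -> f e1 = f e2 -> e1 = e2) ->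
  uniquely_weakly_clean I -> uniquely_weakly_clean [pred x | f x \in I].
Proof.
move=> lift_idem inj_idem uwcI x.
have [e [[ee clean_e] uniq_e]] := uwcI (f x).
have [e' e'e' fe'] := lift_idem e ee.
exists e'; split; first by split=> //; rewrite !inE rmorphB rmorphD fe'.
move=> e'' [e''e'' clean_e'']; apply: inj_idem => //.
rewrite fe'; apply: uniq_e; split; first by rewrite -rmorphM e''e''.
by move: clean_e''; rewrite !inE rmorphB rmorphD.
Qed.

End Ideal.

Section IdealExtension.
Variables (R : pzRingType) (V : zmodType) (B : bimodRing R V).

Lemma lact0r v : lact B 0 v = 0.
Proof. by apply: (addrI (lact B 0 v)); rewrite -lactDl !addr0. Qed.
Lemma lactr0 r : lact B r 0 = 0.
Proof. by apply: (addrI (lact B r 0)); rewrite -lactDr !addr0. Qed.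
Lemma ract0r r : ract B 0 r = 0.
Proof. by apply: (addrI (ract B 0 r)); rewrite -ractDl !addr0. Qed.
Lemma vmul0r v : vmul B 0 v = 0.
Proof. by apply: (addrI (vmul B 0 v)); rewrite -vmulDl !addr0. Qed.
Lemma vmulr0 v : vmul B v 0 = 0.
Proof. by apply: (addrI (vmul B v 0)); rewrite -vmulDr !addr0. Qed.
Lemma vmulNl u v : vmul B (- u) v = - vmul B u v.
Proof. by apply: (addrI (vmul B u v)); rewrite -vmulDl !subrr vmul0r. Qed.
Lemma vmulNr u v : vmul B u (- v) = - vmul B u v.
Proof. by apply: (addrI (vmul B u v)); rewrite -vmulDr !subrr vmulr0. Qed.

Definition iext_in (r : R) : iext B := (r, 0).
Definition iext_fst (x : iext B) : R := x.1.

Lemma iext_in_zmod_morphism : zmod_morphism iext_in.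
Proof. by move=> r s; apply: injective_projections; rewrite //= subrr. Qed.
Lemma iext_in_monoid_morphism : monoid_morphism iext_in.
Proof.
split=> // r s; rewrite /iext_in iext_mulE /=.
by rewrite lactr0 ract0r vmul0r !addr0.
Qed.
HB.instance Definition _ := GRing.isZmodMorphism.Build _ _ iext_in
  iext_in_zmod_morphism.
HB.instance Definition _ := GRing.isMonoidMorphism.Build _ _ iext_in
  iext_in_monoid_morphism.

Lemma iext_fst_zmod_morphism : zmod_morphism iext_fst.
Proof. by []. Qed.
Lemma iext_fst_monoid_morphism : monoid_morphism iext_fst.
Proof. by []. Qed.
HB.instance Definition _ := GRing.isZmodMorphism.Build _ _ iext_fst
  iext_fst_zmod_morphism.
HB.instance Definition _ := GRing.isMonoidMorphism.Build _ _ iext_fst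
  iext_fst_monoid_morphism.

Lemma iext_central_lact_ract e v :
  iext_in e * ((0, v) : iext B) = ((0, v) : iext B) * iext_in e ->
  lact B e v = ract B v e.
Proof.
move=> /(congr1 snd); rewrite !iext_mulE /=.
by rewrite ract0r vmul0r lact0r vmulr0 !addr0 add0r.
Qed.

Section CommutingIdempotents.
Hypothesis freeV : idempotent_free B.
Hypothesis idem_comm :
  forall (e : R) (v : V), e * e = e -> lact B e v = ract B v e.

(* With a := e w, multiplying the idempotency equation of (e, w) on the left
   by e gives a w = -a, and e w = w e turns this into a a = -a. *)
Lemma iext_idem_snd0 (x : iext B) : x * x = x -> x.2 = 0.
Proof.
case: x => e w /= xx; have ee : e * e = e := congr1 fst xx.
have := congr1 snd xx; rewrite iext_mulE /= -(idem_comm w ee).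
set a := lact B e w => idem_w.
have ea : lact B e a = a by rewrite /a -lactA ee.
have aw : vmul B a w = - a.
  move: (congr1 (lact B e) idem_w); rewrite !lactDr ea -lmulA -/a => eq_a.
  by apply: (addrI (a + a)); rewrite eq_a addrK.
have aa : vmul B a a = - a.
  rewrite {1}/a (idem_comm w ee) rlmulA ea {1}/a -rlmulA -(idem_comm w ee).
  exact: aw.
have a0 : a = 0.
  by apply: oppr_inj; rewrite oppr0; apply: freeV; rewrite vmulNl vmulNr opprK.
by apply: freeV; move: idem_w; rewrite a0 !add0r.
Qed.

Lemma iext_idemE (x : iext B) : x * x = x -> x = iext_in (iext_fst x).
Proof. by case: x => e w xx; rewrite /iext_in /= -(iext_idem_snd0 xx). Qed.

End CommutingIdempotents.
End IdealExtension.

Theorem mainTheorem14 (R : pzRingType) (V : zmodType) (B : bimodRing R V)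
    (HV : idempotent_free B) :
  (exists I' : {pred iext B}, is_ideal I' /\ uniquely_weakly_clean I') <->
  ((exists I : {pred R}, is_ideal I /\ uniquely_weakly_clean I) /\
   (forall (e : R) (v : V), e * e = e -> lact B e v = ract B v e)).
Proof.
split=> [[I' [idealI' uwcI']] | [[I [idealI uwcI]] idem_comm]].
- have idem_comm (e : R) (v : V) : e * e = e -> lact B e v = ract B v e.
    move=> ee; apply/iext_central_lact_ract/(idem_central idealI' uwcI').
    by rewrite -rmorphM ee.
  split=> //; exists ([pred r | iext_in B r \in I'] : {pred R}).
  split; first exact: is_ideal_preim.
  apply: uniquely_weakly_clean_preim uwcI' => [x xx | e1 e2 _ _ [] //].
  exists (iext_fst x); first by rewrite -rmorphM xx.
  exact: (esym (iext_idemE HV idem_comm xx)).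
- exists ([pred x | iext_fst x \in I] : {pred iext B}).
  split; first exact: is_ideal_preim.
  apply: uniquely_weakly_clean_preim uwcI => [e ee | e1 e2 e1e1 e2e2 eq12].
    by exists (iext_in B e); rewrite // -rmorphM ee.
  by rewrite (iext_idemE HV idem_comm e1e1) (iext_idemE HV idem_comm e2e2) eq12.
Qed.
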